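(* Let $\varepsilon>0$ and $\delta\in(0,1)$. Define \[ n_1 = 1+\left\lfloor\frac{1}{\varepsilon}\ln\left(\frac{e^{\varepsilon}+2\delta-1}{(e^{\varepsilon}+1)\delta}\right)\right\rfloor, \] define $\pi_{\mathrm{opt}}(n)=\frac{e^{n\varepsilon}-1}{e^{\varepsilon}-1}\cdot\delta$ for integers $0\le n\le n_1$, and \[ n_2 = n_1 + \left\lfloor\frac{1}{\varepsilon}\ln\left(1+\frac{e^{\varepsilon}-1}{\delta}\left(1-\pi_{\mathrm{opt}}(n_1)\right)\right)\right\rfloor . \] For integers $n$ with $n_1<n\le n_2$, writing $m=n-n_1$, define \[ \pi_{\mathrm{opt}}(n)=\left(1-e^{-m\varepsilon}\right)\left(1+\frac{\delta}{e^{\varepsilon}-1}\right)+e^{-m\varepsilon}\pi_{\mathrm{opt}}(n_1), \] and define $\pi_{\mathrm{opt}}(n)=1$ for $n>n_2$. Then $\pi_{\mathrm{opt}}$ is an optimal partition selection primitive for $(\varepsilon,\delta)$-differential privacy.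
   Context: $\mathbb{N}=\{0,1,2,\dots\}$. A partition selection primitive is a function $\pi:\mathbb{N}\to[0,1]$ with $\pi(0)=0$; it is interpreted as: count the number $n$ of users in a partition and release (keep) the partition with probability $\pi(n)$, drop it otherwise. Let $\rho_\pi(n)$ be the random variable in $\{\mathrm{drop},\mathrm{keep}\}$ equal to keep with probability $\pi(n)$ and drop with probability $1-\pi(n)$. The primitive $\pi$ is $(\varepsilon,\delta)$-differentially private if for all $n,n'\in\mathbb{N}$ with $|n-n'|=1$ (adding or removing one user) and all $S\subseteq\{\mathrm{drop},\mathrm{keep}\}$, $\Pr[\rho_\pi(n)\in S]\le e^{\varepsilon}\Pr[\rho_\pi(n')\in S]+\delta$. A primitive $\pi_{\mathrm{opt}}$ is optimal for $(\varepsilon,\delta)$-DP if it is $(\varepsilon,\delta)$-differentially private and for every $(\varepsilon,\delta)$-differentially private partition selection primitive $\pi$ and every $n\in\mathbb{N}$, $\pi(n)\le\pi_{\mathrm{opt}}(n)$. *)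

From Stdlib Require Import Reals ZArith Lra.
Open Scope R_scope.

Inductive outcome := drop | keep.

Definition is_primitive (pi : nat -> R) : Prop :=
  pi 0%nat = 0 /\ forall n, 0 <= pi n <= 1.

Definition prob_in (pi : nat -> R) (n : nat) (S : outcome -> bool) : R :=
  (if S keep then pi n else 0) + (if S drop then 1 - pi n else 0).

Definition is_dp (eps delta : R) (pi : nat -> R) : Prop :=
  forall n n' : nat, (n' = S n \/ n = S n') ->
  forall S : outcome -> bool,
    prob_in pi n S <= exp eps * prob_in pi n' S + delta.

Definition is_optimal (eps delta : R) (pi_opt : nat -> R) : Prop :=
  is_primitive pi_opt /\ is_dp eps delta pi_opt /\
  forall pi : nat -> R, is_primitive pi -> is_dp eps delta pi ->
    forall n : nat, pi n <= pi_opt n.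

(* floor, via Stdlib's Int_part (= up r - 1 = floor r) *)
Definition floorZ (r : R) : Z := Int_part r.

Definition n1 (eps delta : R) : Z :=
  (1 + floorZ ((1 / eps) *
     ln ((exp eps + 2 * delta - 1) / ((exp eps + 1) * delta))))%Z.

Definition pi_lin (eps delta : R) (k : Z) : R :=
  (exp (IZR k * eps) - 1) / (exp eps - 1) * delta.

Definition n2 (eps delta : R) : Z :=
  (n1 eps delta + floorZ ((1 / eps) *
     ln (1 + (exp eps - 1) / delta * (1 - pi_lin eps delta (n1 eps delta)))))%Z.

Definition pi_opt (eps delta : R) (n : nat) : R :=
  let z := Z.of_nat n in
  if (z <=? n1 eps delta)%Z then pi_lin eps delta z
  else if (z <=? n2 eps delta)%Z then
    let m := IZR (z - n1 eps delta) in
    (1 - exp (- (m * eps))) * (1 + delta / (exp eps - 1))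
    + exp (- (m * eps)) * pi_lin eps delta (n1 eps delta)
  else 1.

(* The constraints of (eps, delta)-DP between n and n + 1 for S = {keep} and S = {drop}
   (the other two subsets are trivial) say exactly that pi (n + 1) <= F (pi n) and
   pi n <= F (pi (n + 1)), where F p = min (e^eps p + delta, 1 - (1 - p - delta) e^-eps, 1).
   F is monotone and F p >= p on [0, 1], so the orbit F^n 0 is DP and, by induction,
   dominates every DP primitive.  The closed form is that orbit: up to n1 the keep bound is
   the smaller one and p -> e^eps p + delta yields the geometric sum; from then on the drop
   bound binds and p -> 1 - (1 - p - delta) e^-eps converges geometrically to
   1 + delta / (e^eps - 1) > 1, so the orbit reaches the cap 1 right after n2. *)

From Stdlib Require Import Reals Lra Lia.
Open Scope R_scope.

Lemma exp_le_iff (x y : R) : exp x <= exp y <-> x <= y.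
Proof.
  split.
  - intros Hle. destruct (Rle_or_lt x y) as [|Hlt]; [assumption|].
    apply exp_increasing in Hlt. lra.
  - intros [Hlt|Heq]; [left; apply exp_increasing; exact Hlt|rewrite Heq; lra].
Qed.

Lemma exp_gt_1 (x : R) : 0 < x -> 1 < exp x.
Proof. rewrite <- exp_0. apply exp_increasing. Qed.

Lemma exp_ge_1 (x : R) : 0 <= x -> 1 <= exp x.
Proof. rewrite <- exp_0. apply exp_le_iff. Qed.

Lemma exp_scaled_ln (eps y : R) : 0 < eps -> 0 < y -> exp (1 / eps * ln y * eps) = y.
Proof.
  intros Heps Hy. replace (1 / eps * ln y * eps) with (ln y) by (field; lra).
  apply exp_ln, Hy.
Qed.

Lemma scaled_ln_nonneg (eps y : R) : 0 < eps -> 1 <= y -> 0 <= 1 / eps * ln y.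
Proof.
  intros Heps Hy. destruct (Rle_or_lt 0 (1 / eps * ln y)) as [|Hneg]; [assumption|].
  apply Rmult_lt_compat_r with (r := eps) in Hneg; [|assumption].
  apply exp_increasing in Hneg. rewrite exp_scaled_ln in Hneg by lra.
  rewrite Rmult_0_l, exp_0 in Hneg. lra.
Qed.

Lemma floorZ_spec (r : R) : IZR (floorZ r) <= r < IZR (floorZ r) + 1.
Proof. unfold floorZ. destruct (base_Int_part r). lra. Qed.

Lemma floorZ_nonneg (r : R) : 0 <= r -> (0 <= floorZ r)%Z.
Proof.
  intros Hr. destruct (floorZ_spec r).
  assert (-1 < floorZ r)%Z by (apply lt_IZR; lra). lia.
Qed.

(* With a = e^eps and d = delta: the bounds on pi (n + 1) imposed by S = {keep} and
   S = {drop} for the pair (n, n + 1). *)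
Definition keep_cap (a d p : R) : R := a * p + d.
Definition drop_cap (a d p : R) : R := 1 - (1 - p - d) / a.
Definition dp_step (a d p : R) : R := Rmin (Rmin (keep_cap a d p) (drop_cap a d p)) 1.

Section StepMap.

Variables a d : R.
Hypothesis Ha : 1 <= a.
Hypothesis Hd : 0 <= d <= 1.

Lemma le_drop_cap (p q : R) : q <= drop_cap a d p <-> 1 - p <= a * (1 - q) + d.
Proof.
  unfold drop_cap.
  replace (1 - (1 - p - d) / a) with ((a - 1 + p + d) / a) by (field; lra).
  split; intros H.
  - apply Rmult_le_compat_r with (r := a) in H; [|lra].
    unfold Rdiv in H. rewrite Rmult_assoc, Rinv_l in H; lra.
  - apply Rmult_le_reg_r with a; [lra|]. unfold Rdiv. rewrite Rmult_assoc, Rinv_l; lra.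
Qed.

Lemma le_dp_step (p q : R) :
  q <= dp_step a d p <-> q <= keep_cap a d p /\ 1 - p <= a * (1 - q) + d /\ q <= 1.
Proof.
  rewrite <- le_drop_cap. unfold dp_step. split.
  - intros H. pose proof (Rmin_l (Rmin (keep_cap a d p) (drop_cap a d p)) 1).
    pose proof (Rmin_r (Rmin (keep_cap a d p) (drop_cap a d p)) 1).
    pose proof (Rmin_l (keep_cap a d p) (drop_cap a d p)).
    pose proof (Rmin_r (keep_cap a d p) (drop_cap a d p)). lra.
  - intros (Hk & Hdr & H1). repeat apply Rmin_glb; assumption.
Qed.

Lemma dp_step_ge (p : R) : 0 <= p <= 1 -> p <= dp_step a d p.
Proof. intros Hp. apply le_dp_step. unfold keep_cap. nra. Qed.

Lemma dp_step_mono (p q : R) : p <= q -> dp_step a d p <= dp_step a d q.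
Proof.
  intros Hpq. apply le_dp_step.
  destruct (proj1 (le_dp_step p _) (Rle_refl _)) as (Hk & Hdr & H1).
  unfold keep_cap in *. nra.
Qed.

Lemma drop_cap_mul (p : R) : drop_cap a d p * a = a - 1 + p + d.
Proof. unfold drop_cap. field. lra. Qed.

Lemma keep_le_drop_cap (p : R) :
  p * (a + 1) <= 1 - d -> keep_cap a d p <= drop_cap a d p.
Proof.
  intros Hp. apply Rmult_le_reg_r with a; [lra|].
  rewrite drop_cap_mul. unfold keep_cap. nra.
Qed.

Lemma drop_le_keep_cap (p : R) :
  1 - d <= p * (a + 1) -> drop_cap a d p <= keep_cap a d p.
Proof.
  intros Hp. apply Rmult_le_reg_r with a; [lra|].
  rewrite drop_cap_mul. unfold keep_cap. nra.
Qed.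

Lemma dp_step_keep (p : R) : p * (a + 1) <= 1 - d -> dp_step a d p = keep_cap a d p.
Proof.
  intros Hp. unfold dp_step.
  rewrite (Rmin_left (keep_cap a d p)) by (apply keep_le_drop_cap; exact Hp).
  apply Rmin_left. unfold keep_cap. destruct (Rle_or_lt 0 p); nra.
Qed.

Lemma dp_step_drop (p : R) : 1 - d <= p * (a + 1) -> drop_cap a d p <= 1 ->
  dp_step a d p = drop_cap a d p.
Proof.
  intros Hp H1. unfold dp_step.
  rewrite (Rmin_right (keep_cap a d p)) by (apply drop_le_keep_cap; exact Hp).
  apply Rmin_left, H1.
Qed.

Lemma dp_step_one (p : R) : 1 - d <= p * (a + 1) -> 1 <= drop_cap a d p ->
  dp_step a d p = 1.
Proof.
  intros Hp H1. unfold dp_step.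
  rewrite (Rmin_right (keep_cap a d p)) by (apply drop_le_keep_cap; exact Hp).
  apply Rmin_right, H1.
Qed.

Lemma dp_step_at_1 : dp_step a d 1 = 1.
Proof.
  apply dp_step_one; [lra|].
  apply Rmult_le_reg_r with a; [lra|]. rewrite drop_cap_mul. lra.
Qed.

End StepMap.

Lemma is_dp_iff_keep_drop (eps delta : R) (pi : nat -> R) :
  0 <= eps -> 0 <= delta -> (forall n, 0 <= pi n <= 1) ->
  is_dp eps delta pi <->
  forall n n', (n' = S n \/ n = S n') ->
    pi n <= exp eps * pi n' + delta /\ 1 - pi n <= exp eps * (1 - pi n') + delta.
Proof.
  intros Heps Hdelta Hpi. pose proof (exp_ge_1 eps Heps) as Ha. split.
  - intros Hdp n n' Hn. split.
    + specialize (Hdp n n' Hn (fun o => match o with keep => true | drop => false end)).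
      unfold prob_in in Hdp. simpl in Hdp. lra.
    + specialize (Hdp n n' Hn (fun o => match o with keep => false | drop => true end)).
      unfold prob_in in Hdp. simpl in Hdp. lra.
  - intros Hnb n n' Hn S. destruct (Hnb n n' Hn). pose proof (Hpi n'). unfold prob_in.
    destruct (S keep), (S drop); nra.
Qed.

Lemma is_dp_iff_step (eps delta : R) (pi : nat -> R) :
  0 <= eps -> 0 <= delta <= 1 -> (forall n, 0 <= pi n <= 1) ->
  is_dp eps delta pi <->
  forall n, pi (S n) <= dp_step (exp eps) delta (pi n) /\
            pi n <= dp_step (exp eps) delta (pi (S n)).
Proof.
  intros Heps Hdelta Hpi. pose proof (exp_ge_1 eps Heps) as Ha.
  rewrite is_dp_iff_keep_drop by (lra || assumption).
  setoid_rewrite le_dp_step; try assumption. unfold keep_cap. split.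
  - intros Hnb n. pose proof (Hpi n). pose proof (Hpi (S n)).
    destruct (Hnb n (S n) (or_introl eq_refl)).
    destruct (Hnb (S n) n (or_intror eq_refl)). lra.
  - intros Hst n n' [-> | ->]; [pose proof (Hst n) | pose proof (Hst n')]; lra.
Qed.

Theorem dp_step_orbit_optimal (eps delta : R) (q : nat -> R) :
  0 <= eps -> 0 <= delta <= 1 -> q 0%nat = 0 ->
  (forall n, q (S n) = dp_step (exp eps) delta (q n)) -> is_optimal eps delta q.
Proof.
  intros Heps Hdelta Hq0 Hq. pose proof (exp_ge_1 eps Heps) as Ha.
  assert (Hbound : forall n, 0 <= q n <= 1).
  { induction n as [|n IH]; [rewrite Hq0; lra|]. rewrite Hq.
    pose proof (dp_step_ge _ _ Ha Hdelta _ IH).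
    pose proof (proj1 (le_dp_step _ delta Ha (q n) _) (Rle_refl _)). lra. }
  assert (Hmono : forall n, q n <= q (S n)).
  { intros n. rewrite Hq. apply dp_step_ge; auto. }
  split; [split; assumption|split].
  - apply is_dp_iff_step; try assumption. intros n. rewrite <- Hq. split; [lra|].
    apply Rle_trans with (q (S n)); [apply Hmono | apply dp_step_ge; auto].
  - intros pi [Hpi0 Hpi] Hdp n. rewrite is_dp_iff_step in Hdp by assumption.
    induction n as [|n IH]; [rewrite Hpi0, Hq0; lra|]. rewrite Hq.
    apply Rle_trans with (dp_step (exp eps) delta (pi n)); [apply Hdp|].
    apply dp_step_mono; assumption.
Qed.

Lemma pi_lin_0 (eps delta : R) : pi_lin eps delta 0 = 0.
Proof. unfold pi_lin. rewrite Rmult_0_l, exp_0. unfold Rdiv. ring. Qed.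

Lemma pi_lin_succ (eps delta : R) (k : Z) : 0 < eps ->
  pi_lin eps delta (k + 1) = keep_cap (exp eps) delta (pi_lin eps delta k).
Proof.
  intros Heps. pose proof (exp_gt_1 eps Heps). unfold pi_lin, keep_cap.
  rewrite plus_IZR, Rmult_plus_distr_r, exp_plus, Rmult_1_l. field. lra.
Qed.

Section ClosedForm.

Variables eps delta : R.
Hypothesis Heps : 0 < eps.
Hypothesis Hdelta : 0 < delta < 1.

Definition lin_base : R := (exp eps + 2 * delta - 1) / ((exp eps + 1) * delta).
Definition lin_threshold : R := 1 / eps * ln lin_base.

Definition decay_base : R :=
  1 + (exp eps - 1) / delta * (1 - pi_lin eps delta (n1 eps delta)).
Definition decay_threshold : R := 1 / eps * ln decay_base.

Definition pi_decay (m : Z) : R :=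
  (1 - exp (- (IZR m * eps))) * (1 + delta / (exp eps - 1))
  + exp (- (IZR m * eps)) * pi_lin eps delta (n1 eps delta).

Let Ha : 1 < exp eps := exp_gt_1 eps Heps.

(* [lin_base] is the value of e^(k eps) at which pi_lin k reaches (1 - delta) / (e^eps + 1),
   where keep_cap and drop_cap cross. *)
Lemma pi_lin_slack (k : Z) :
  pi_lin eps delta k * (exp eps + 1) - (1 - delta) =
  (exp (IZR k * eps) - lin_base) * ((exp eps + 1) * delta / (exp eps - 1)).
Proof. unfold pi_lin, lin_base. field. split; lra. Qed.

Lemma lin_base_ge_1 : 1 <= lin_base.
Proof.
  unfold lin_base. apply Rmult_le_reg_r with ((exp eps + 1) * delta); [nra|].
  unfold Rdiv. rewrite Rmult_assoc, Rinv_l by nra. nra.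
Qed.

Lemma pi_lin_keep_regime (k : Z) : IZR k <= lin_threshold ->
  pi_lin eps delta k * (exp eps + 1) <= 1 - delta.
Proof.
  intros Hk. assert (exp (IZR k * eps) <= lin_base).
  { rewrite <- (exp_scaled_ln eps lin_base Heps) by (pose proof lin_base_ge_1; lra).
    apply exp_le_iff, Rmult_le_compat_r; [lra | exact Hk]. }
  pose proof (pi_lin_slack k).
  assert (0 < (exp eps + 1) * delta / (exp eps - 1)) by (apply Rdiv_lt_0_compat; nra).
  nra.
Qed.

Lemma pi_lin_drop_regime (k : Z) : lin_threshold <= IZR k ->
  1 - delta <= pi_lin eps delta k * (exp eps + 1).
Proof.
  intros Hk. assert (lin_base <= exp (IZR k * eps)).
  { rewrite <- (exp_scaled_ln eps lin_base Heps) by (pose proof lin_base_ge_1; lra).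
    apply exp_le_iff, Rmult_le_compat_r; [lra | exact Hk]. }
  pose proof (pi_lin_slack k).
  assert (0 < (exp eps + 1) * delta / (exp eps - 1)) by (apply Rdiv_lt_0_compat; nra).
  nra.
Qed.

Lemma n1_spec : IZR (n1 eps delta) - 1 <= lin_threshold < IZR (n1 eps delta) /\
  (1 <= n1 eps delta)%Z.
Proof.
  pose proof (floorZ_spec lin_threshold).
  pose proof (floorZ_nonneg lin_threshold (scaled_ln_nonneg eps _ Heps lin_base_ge_1)).
  unfold n1. fold lin_base lin_threshold. rewrite plus_IZR. split; [lra|lia].
Qed.

Lemma pi_lin_n1_le_1 : pi_lin eps delta (n1 eps delta) <= 1.
Proof.
  destruct n1_spec as [[Hlo _] Hn1].
  replace (n1 eps delta) with ((n1 eps delta - 1) + 1)%Z by ring.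
  rewrite pi_lin_succ by assumption. unfold keep_cap.
  pose proof (pi_lin_keep_regime (n1 eps delta - 1)) as Hk.
  rewrite minus_IZR in Hk. specialize (Hk Hlo).
  destruct (Rle_or_lt 0 (pi_lin eps delta (n1 eps delta - 1))); nra.
Qed.

Lemma pi_lin_n1_drop_regime : 1 - delta <= pi_lin eps delta (n1 eps delta) * (exp eps + 1).
Proof. apply pi_lin_drop_regime. destruct n1_spec; lra. Qed.

Lemma pi_decay_0 : pi_decay 0 = pi_lin eps delta (n1 eps delta).
Proof. unfold pi_decay. rewrite Rmult_0_l, Ropp_0, exp_0. ring. Qed.

Lemma pi_decay_succ (m : Z) :
  pi_decay (m + 1) = drop_cap (exp eps) delta (pi_decay m).
Proof.
  unfold pi_decay, drop_cap.
  rewrite plus_IZR, Rmult_plus_distr_r, Ropp_plus_distr, exp_plus, Rmult_1_l, (exp_Ropp eps).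
  field. lra.
Qed.

Lemma pi_decay_slack (m : Z) :
  1 - pi_decay m =
  (decay_base - exp (IZR m * eps)) * (delta / ((exp eps - 1) * exp (IZR m * eps))).
Proof.
  pose proof (exp_pos (IZR m * eps)).
  unfold pi_decay, decay_base. rewrite exp_Ropp. field. split; lra.
Qed.

Lemma decay_base_ge_1 : 1 <= decay_base.
Proof.
  pose proof pi_lin_n1_le_1.
  assert (0 < (exp eps - 1) / delta) by (apply Rdiv_lt_0_compat; lra).
  unfold decay_base. nra.
Qed.

Lemma pi_decay_le_1 (m : Z) : IZR m <= decay_threshold -> pi_decay m <= 1.
Proof.
  intros Hm. assert (exp (IZR m * eps) <= decay_base).
  { rewrite <- (exp_scaled_ln eps decay_base Heps) by (pose proof decay_base_ge_1; lra).
    apply exp_le_iff, Rmult_le_compat_r; [lra | exact Hm]. }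
  pose proof (pi_decay_slack m). pose proof (exp_pos (IZR m * eps)).
  assert (0 < delta / ((exp eps - 1) * exp (IZR m * eps)))
    by (apply Rdiv_lt_0_compat; nra).
  nra.
Qed.

Lemma pi_decay_gt_1 (m : Z) : decay_threshold < IZR m -> 1 < pi_decay m.
Proof.
  intros Hm. assert (decay_base < exp (IZR m * eps)).
  { rewrite <- (exp_scaled_ln eps decay_base Heps) by (pose proof decay_base_ge_1; lra).
    apply exp_increasing, Rmult_lt_compat_r; [lra | exact Hm]. }
  pose proof (pi_decay_slack m). pose proof (exp_pos (IZR m * eps)).
  assert (0 < delta / ((exp eps - 1) * exp (IZR m * eps)))
    by (apply Rdiv_lt_0_compat; nra).
  nra.
Qed.

Lemma pi_decay_drop_regime (m : Z) : (0 <= m)%Z ->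
  1 - delta <= pi_decay m * (exp eps + 1).
Proof.
  intros Hm. apply IZR_le in Hm.
  assert (exp (- (IZR m * eps)) <= 1).
  { rewrite <- exp_0. apply exp_le_iff. nra. }
  assert (0 < delta / (exp eps - 1)) by (apply Rdiv_lt_0_compat; lra).
  assert (pi_lin eps delta (n1 eps delta) <= pi_decay m).
  { pose proof pi_lin_n1_le_1. unfold pi_decay.
    assert (0 <= (1 - exp (- (IZR m * eps))) *
                 (1 + delta / (exp eps - 1) - pi_lin eps delta (n1 eps delta)))
      by (apply Rmult_le_pos; lra).
    lra. }
  pose proof pi_lin_n1_drop_regime. nra.
Qed.

Lemma n2_spec :
  IZR (n2 eps delta - n1 eps delta) <= decay_threshold <
  IZR (n2 eps delta - n1 eps delta) + 1 /\ (n1 eps delta <= n2 eps delta)%Z.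
Proof.
  pose proof (floorZ_spec decay_threshold).
  pose proof (floorZ_nonneg decay_threshold (scaled_ln_nonneg eps _ Heps decay_base_ge_1)).
  unfold n2. fold decay_base decay_threshold.
  replace (n1 eps delta + floorZ decay_threshold - n1 eps delta)%Z
    with (floorZ decay_threshold) by ring.
  split; [lra|lia].
Qed.

Lemma pi_lin_step (k : Z) : IZR k <= lin_threshold ->
  dp_step (exp eps) delta (pi_lin eps delta k) = pi_lin eps delta (k + 1).
Proof.
  intros Hk. rewrite pi_lin_succ by assumption.
  apply dp_step_keep; [lra | lra | apply pi_lin_keep_regime, Hk].
Qed.

Lemma pi_decay_step (m : Z) : (0 <= m)%Z -> IZR (m + 1) <= decay_threshold ->
  dp_step (exp eps) delta (pi_decay m) = pi_decay (m + 1).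
Proof.
  intros Hm Hm1. rewrite pi_decay_succ.
  apply dp_step_drop; [lra | apply pi_decay_drop_regime, Hm |].
  rewrite <- pi_decay_succ. apply pi_decay_le_1, Hm1.
Qed.

Lemma pi_decay_step_exit (m : Z) : (0 <= m)%Z -> decay_threshold < IZR (m + 1) ->
  dp_step (exp eps) delta (pi_decay m) = 1.
Proof.
  intros Hm Hm1. apply dp_step_one; [lra | apply pi_decay_drop_regime, Hm |].
  rewrite <- pi_decay_succ. apply Rlt_le, pi_decay_gt_1, Hm1.
Qed.

Lemma pi_opt_lin (n : nat) : (Z.of_nat n <= n1 eps delta)%Z ->
  pi_opt eps delta n = pi_lin eps delta (Z.of_nat n).
Proof. intros Hn. unfold pi_opt. rewrite (proj2 (Z.leb_le _ _) Hn). reflexivity. Qed.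

Lemma pi_opt_decay (n : nat) : (n1 eps delta <= Z.of_nat n <= n2 eps delta)%Z ->
  pi_opt eps delta n = pi_decay (Z.of_nat n - n1 eps delta).
Proof.
  intros [Hlo Hhi]. unfold pi_opt.
  destruct (Z.leb_spec (Z.of_nat n) (n1 eps delta)).
  - replace (Z.of_nat n) with (n1 eps delta) by lia.
    rewrite Z.sub_diag, pi_decay_0. reflexivity.
  - rewrite (proj2 (Z.leb_le _ _) Hhi). reflexivity.
Qed.

Lemma pi_opt_one (n : nat) : (n2 eps delta < Z.of_nat n)%Z -> pi_opt eps delta n = 1.
Proof.
  intros Hn. destruct n2_spec as [_ H12]. unfold pi_opt.
  rewrite (proj2 (Z.leb_gt _ _)) by lia. rewrite (proj2 (Z.leb_gt _ _) Hn). reflexivity.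
Qed.

Lemma pi_opt_0 : pi_opt eps delta 0 = 0.
Proof.
  destruct n1_spec as [_ Hn1]. rewrite pi_opt_lin by (simpl; lia). apply pi_lin_0.
Qed.

Lemma pi_opt_succ (n : nat) :
  pi_opt eps delta (S n) = dp_step (exp eps) delta (pi_opt eps delta n).
Proof.
  destruct n1_spec as [[Hn1 _] _]. destruct n2_spec as [[Hn2lo Hn2hi] H12].
  assert (Hz : Z.of_nat (S n) = (Z.of_nat n + 1)%Z) by lia.
  destruct (Z.le_gt_cases (Z.of_nat n + 1) (n1 eps delta)) as [Hlin|Hn1z].
  - rewrite pi_opt_lin, pi_opt_lin, Hz by lia. symmetry. apply pi_lin_step.
    apply IZR_le in Hlin. rewrite plus_IZR in Hlin. lra.
  - assert (Hm : (0 <= Z.of_nat n - n1 eps delta)%Z) by lia.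
    destruct (Z.le_gt_cases (Z.of_nat n + 1) (n2 eps delta)) as [Hdec|Hn2z].
    + rewrite pi_opt_decay, pi_opt_decay, Hz by lia.
      replace (Z.of_nat n + 1 - n1 eps delta)%Z
        with (Z.of_nat n - n1 eps delta + 1)%Z by ring.
      symmetry. apply pi_decay_step; [exact Hm|].
      assert (IZR (Z.of_nat n - n1 eps delta + 1) <= IZR (n2 eps delta - n1 eps delta))
        by (apply IZR_le; lia). lra.
    + rewrite (pi_opt_one (S n)) by lia. symmetry.
      destruct (Z.le_gt_cases (Z.of_nat n) (n2 eps delta)) as [Hin|Hout].
      * rewrite pi_opt_decay by lia. apply pi_decay_step_exit; [exact Hm|].
        assert (IZR (n2 eps delta - n1 eps delta) + 1
                <= IZR (Z.of_nat n - n1 eps delta + 1))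
          by (rewrite <- plus_IZR; apply IZR_le; lia). lra.
      * rewrite pi_opt_one by lia. apply dp_step_at_1; lra.
Qed.

End ClosedForm.

Theorem theorem1 (eps delta : R) (Heps : 0 < eps) (Hdelta : 0 < delta < 1) :
  is_optimal eps delta (pi_opt eps delta).
Proof.
  apply dp_step_orbit_optimal; [lra | lra | |].
  - exact (pi_opt_0 eps delta Heps Hdelta).
  - exact (pi_opt_succ eps delta Heps Hdelta).
Qed.
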